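(* Let $\Lambda$ be an artin algebra, $n\ge 2$, and let $f\colon X\to Y$ be an irreducible morphism in $\mathbf{C_n}({\rm proj}\,\Lambda)$ with $X$ or $Y$ indecomposable. Then: (a) $f$ is of type (sec) if and only if ${\rm Coker}\,f\in\mathbf{C_n}({\rm proj}\,\Lambda)\setminus\{0\}$; (b) $f$ is of type (ret-irred-sec) if and only if ${\rm Coker}\,f\notin\mathbf{C_n}({\rm proj}\,\Lambda)$; (c) $f$ is of type (ret) if and only if ${\rm Coker}\,f=0$.
   Context: For an artin algebra $\Lambda$ and $n\ge 2$, $\mathbf{C_n}({\rm proj}\,\Lambda)$ is the full subcategory of the category of complexes of finitely generated right $\Lambda$-modules consisting of complexes $X=(X^i,d^i_X)$ with $X^i$ projective for all $i$ and $X^i=0$ for $i\notin\{1,\dots,n\}$; morphisms are chain maps $f=\{f^i\}$. The cokernel ${\rm Coker}\,f$ is the complex $({\rm Coker}\,f^i)$ with induced differentials. A morphism in $\mathbf{C_n}({\rm proj}\,\Lambda)$ is irreducible if it is neither a section nor a retraction, and whenever $f=gh$ then $h$ is a section or $g$ is a retraction. Every irreducible $f=\{f^i\}$ in $\mathbf{C_n}({\rm proj}\,\Lambda)$ is of one of the following types: (sec) every $f^i$ is a section in ${\rm proj}\,\Lambda$; (ret) every $f^i$ is a retraction in ${\rm proj}\,\Lambda$; (ret-irred-sec) there is $i$ with $f^i$ irreducible in ${\rm proj}\,\Lambda$, $f^j$ a section for all $j>i$ and $f^j$ a retraction for all $j<i$. *)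

(* Right Lambda-modules are modelled as left modules over the
   converse ring Lambda^c (right action  m . a  :=  a *: m). *)
From mathcomp Require Import all_boot all_algebra.
Set Implicit Arguments. Unset Strict Implicit. Unset Printing Implicit Defensive.
Import GRing.Theory.
Local Open Scope ring_scope.

Definition is_ideal (R : comNzRingType) (I : R -> Prop) : Prop :=
  [/\ I 0, (forall x y, I x -> I y -> I (x - y)) & (forall a x, I x -> I (a * x))].

Definition artinian_ring (R : comNzRingType) : Prop :=
  forall I : nat -> R -> Prop,
    (forall k, is_ideal (I k)) ->
    (forall k x, I k.+1 x -> I k x) ->
    exists m, forall k, (m <= k)%N -> forall x, I k x <-> I m x.

Definition fin_gen (A : pzRingType) (M : lmodType A) : Prop :=
  exists s : seq M, forall x : M,
    exists c : 'I_(size s) -> A, x = \sum_(i < size s) c i *: s`_i.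

Definition artin_algebra (R : comNzRingType) (L : algType R) : Prop :=
  artinian_ring R /\ fin_gen L.

Definition surj (S T : Type) (f : S -> T) : Prop := forall y, exists x, f x = y.

Section Modules.
Variable A : pzRingType.  (* A = Lambda^c *)

Definition morph (M N : lmodType A) (f : M -> N) : Prop := linear f.

Definition projective (P : lmodType A) : Prop :=
  forall (M N : lmodType A) (g : M -> N) (h : P -> N),
    morph g -> surj g -> morph h ->
    exists k : P -> M, morph k /\ forall x, g (k x) = h x.

Definition projmod (P : lmodType A) : Prop := fin_gen P /\ projective P.

Definition section_proj (P Q : lmodType A) (f : P -> Q) : Prop :=
  exists g : Q -> P, morph g /\ forall x, g (f x) = x.
Definition retraction_proj (P Q : lmodType A) (f : P -> Q) : Prop :=
  exists g : Q -> P, morph g /\ forall y, f (g y) = y.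
Definition irreducible_proj (P Q : lmodType A) (f : P -> Q) : Prop :=
  [/\ ~ section_proj f, ~ retraction_proj f &
      forall (Z : lmodType A) (h : P -> Z) (g : Z -> Q),
        projmod Z -> morph h -> morph g -> (forall x, f x = g (h x)) ->
        section_proj h \/ retraction_proj g].

Record cpx := Cpx {
  cobj : nat -> lmodType A;
  cd : forall i, cobj i -> cobj i.+1 }.

Definition in_Cn (n : nat) (X : cpx) : Prop :=
  [/\ forall i, morph (@cd X i),
      forall i (x : cobj X i), cd (cd x) = 0,
      forall i, (1 <= i <= n)%N -> projmod (cobj X i) &
      forall i, ~~ (1 <= i <= n)%N -> forall x : cobj X i, x = 0].

Definition cmap (X Y : cpx) := forall i, cobj X i -> cobj Y i.

Definition chain_map (X Y : cpx) (f : cmap X Y) : Prop :=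
  (forall i, morph (f i)) /\
  forall i (x : cobj X i), cd (f i x) = f i.+1 (cd x).

Definition ccomp (X Y Z : cpx) (g : cmap Y Z) (h : cmap X Y) : cmap X Z :=
  fun i x => g i (h i x).

Definition cmap_eq (X Y : cpx) (f g : cmap X Y) : Prop :=
  forall i x, f i x = g i x.

Definition cid (X : cpx) : cmap X X := fun i x => x.

Definition section_C (X Y : cpx) (f : cmap X Y) : Prop :=
  exists g : cmap Y X, chain_map g /\ cmap_eq (ccomp g f) (@cid X).
Definition retraction_C (X Y : cpx) (f : cmap X Y) : Prop :=
  exists g : cmap Y X, chain_map g /\ cmap_eq (ccomp f g) (@cid Y).

Definition irreducible_C (n : nat) (X Y : cpx) (f : cmap X Y) : Prop :=
  [/\ ~ section_C f, ~ retraction_C f &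
      forall (Z : cpx) (h : cmap X Z) (g : cmap Z Y),
        in_Cn n Z -> chain_map h -> chain_map g -> cmap_eq f (ccomp g h) ->
        section_C h \/ retraction_C g].

Definition nonzero_cpx (X : cpx) : Prop := exists i (x : cobj X i), x != 0.

Definition decomposable_C (n : nat) (X : cpx) : Prop :=
  exists (Z1 Z2 : cpx) (i1 : cmap Z1 X) (i2 : cmap Z2 X)
         (p1 : cmap X Z1) (p2 : cmap X Z2),
    [/\ in_Cn n Z1 /\ in_Cn n Z2, nonzero_cpx Z1 /\ nonzero_cpx Z2,
        [/\ chain_map i1, chain_map i2, chain_map p1 & chain_map p2],
        [/\ cmap_eq (ccomp p1 i1) (@cid Z1), cmap_eq (ccomp p2 i2) (@cid Z2),
            (forall i x, p1 i (i2 i x) = 0) & (forall i x, p2 i (i1 i x) = 0)] &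
        forall i x, i1 i (p1 i x) + i2 i (p2 i x) = x].

Definition indecomposable_C (n : nat) (X : cpx) : Prop :=
  nonzero_cpx X /\ ~ decomposable_C n X.

Definition type_sec (n : nat) (X Y : cpx) (f : cmap X Y) : Prop :=
  forall i, (1 <= i <= n)%N -> section_proj (f i).
Definition type_ret (n : nat) (X Y : cpx) (f : cmap X Y) : Prop :=
  forall i, (1 <= i <= n)%N -> retraction_proj (f i).
Definition type_ris (n : nat) (X Y : cpx) (f : cmap X Y) : Prop :=
  exists i, [/\ (1 <= i <= n)%N, irreducible_proj (f i),
    forall j, (i < j <= n)%N -> section_proj (f j) &
    forall j, (1 <= j < i)%N -> retraction_proj (f j)].

Definition is_coker (N M C : lmodType A) (g : N -> M) (q : M -> C) : Prop :=
  [/\ morph q, surj q & forall y, q y = 0 <-> exists x, g x = y].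

Definition coker_zero (X Y : cpx) (f : cmap X Y) : Prop :=
  forall i, surj (f i).

(* Coker f belongs to C_n(proj Lambda): every term Coker f^i is a finitely
   generated projective module (the induced differentials automatically
   square to zero, and terms outside 1..n vanish since those of Y do). *)
Definition coker_in_Cn (n : nat) (X Y : cpx) (f : cmap X Y) : Prop :=
  forall i, exists (C : lmodType A) (q : cobj Y i -> C),
    is_coker (f i) q /\ projmod C.

End Modules.

(* A factorisation f^i = g h of one component of the irreducible chain map f
   through a projective module Z splices into a factorisation of f through
   the complex X^(<i) -> Z -> Y^(>i); irreducibility of f then makes h and all
   f^j, j > i, sections, or g and all f^j, j < i, retractions.  A second splice
   Y^(<=m) -> X^(>m) shows that a retraction f^m followed by a section f^(m+1)
   forces one side to split entirely.  At the least degree k in which f^k is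
   not a retraction this yields the trichotomy sec / ret-irred-sec / ret.
   The cokernel separates the types: Coker f = 0 iff every f^i is onto, hence
   split since Y^i is projective; a split mono into a projective module has a
   projective cokernel, which cannot vanish everywhere as f would then be
   invertible; and if an irreducible f^i had projective cokernel q split by t,
   then f^i = (1 - t q) f^i would make 1 - t q a retraction, i.e. f^i onto. *)
From HB Require Import structures.
From mathcomp Require Import all_boot all_algebra.
From Stdlib Require Import Classical ClassicalEpsilon.
Set Implicit Arguments. Unset Strict Implicit. Unset Printing Implicit Defensive.
Import GRing.Theory.
Local Open Scope ring_scope.

Lemma least_witness (P : nat -> Prop) k :
  P k -> exists m, P m /\ forall j, (j < m)%N -> ~ P j.
Proof.
elim/ltn_ind: k => k IH Pk.
case: (classic (exists2 j, (j < k)%N & P j)) => [[j ltjk Pj] | none].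
  exact: IH ltjk Pj.
by exists k; split => // j ltjk Pj; apply: none; exists j.
Qed.

Section LinearMaps.
Variable A : pzRingType.
Implicit Types M N L : lmodType A.

Definition linmap M N (f : M -> N) (hf : morph f) : {linear M -> N} :=
  HB.pack f (GRing.isLinear.Build A M N *:%R f hf).

Section Laws.
Variables (M N : lmodType A) (f : M -> N) (hf : morph f).

Lemma morph0 : f 0 = 0.
Proof. exact: raddf0 (linmap hf). Qed.

Lemma morphB : {morph f : x y / x - y}.
Proof. exact: raddfB (linmap hf). Qed.

Lemma morphD : {morph f : x y / x + y}.
Proof. exact: raddfD (linmap hf). Qed.

Lemma morphZ a : {morph f : x / a *: x}.
Proof. by move=> x; rewrite -[a *: x]addr0 hf morph0 addr0. Qed.

Lemma morph_sum m (F : 'I_m -> M) : f (\sum_(i < m) F i) = \sum_(i < m) f (F i).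
Proof. exact: (big_morph f morphD morph0). Qed.

End Laws.

Lemma morph_id M : morph (@id M).
Proof. by []. Qed.

Lemma morph_comp M N L (g : N -> L) (h : M -> N) :
  morph g -> morph h -> morph (fun x => g (h x)).
Proof. by move=> hg hh a x y; rewrite hh hg. Qed.

Lemma morph_add M N (g h : M -> N) :
  morph g -> morph h -> morph (fun x => g x + h x).
Proof. by move=> hg hh a x y; rewrite hg hh scalerDr addrACA. Qed.

Lemma morph_sub M N (g h : M -> N) :
  morph g -> morph h -> morph (fun x => g x - h x).
Proof. by move=> hg hh a x y; rewrite hg hh scalerBr opprD addrACA. Qed.

Lemma morph_cst0 M N : morph (fun _ : M => 0 : N).
Proof. by move=> a x y; rewrite scaler0 addr0. Qed.

End LinearMaps.

Section ProjectiveModules.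
Variable A : pzRingType.
Implicit Types M N : lmodType A.

Lemma projmod_zero M : (forall x : M, x = 0) -> projmod M.
Proof.
move=> M0; split.
  by exists [::] => x; exists (fun=> 0); rewrite big_ord0 (M0 x).
move=> M' N' g h hg _ hh; exists (fun=> 0); split; first exact: morph_cst0.
by move=> x; rewrite (morph0 hg) (M0 x) (morph0 hh).
Qed.

Lemma section_proj_ext M N (f g : M -> N) : f =1 g -> section_proj f -> section_proj g.
Proof. by move=> fg [r [hr rK]]; exists r; split=> // x; rewrite -fg. Qed.

Lemma retraction_proj_ext M N (f g : M -> N) :
  f =1 g -> retraction_proj f -> retraction_proj g.
Proof. by move=> fg [s [hs sK]]; exists s; split=> // y; rewrite -fg. Qed.

Lemma surj_retraction M N (f : M -> N) : retraction_proj f -> surj f.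
Proof. by case=> g [_ fg] y; exists (g y). Qed.

Lemma retraction_onto_projective M N (f : M -> N) :
  morph f -> surj f -> projective N -> retraction_proj f.
Proof.
move=> hf sf pN; have [g [hg fg]] := pN M N f id hf sf (@morph_id _ N).
by exists g.
Qed.

Lemma fin_gen_surj M N (f : M -> N) : morph f -> surj f -> fin_gen M -> fin_gen N.
Proof.
move=> hf sf [s gen_s]; exists (map f s) => y.
have [x <-] := sf y; have [c ->] := gen_s x.
have e : size (map f s) = size s by rewrite size_map.
exists (fun i => c (cast_ord e i)); rewrite (morph_sum hf).
rewrite (reindex (cast_ord (esym e))) /=; last first.
  by exists (cast_ord e) => i _; rewrite ?cast_ordK ?cast_ordKV.
apply: eq_bigr => i _; rewrite cast_ordKV (morphZ hf).
by rewrite (nth_map 0) //= ltn_ord.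
Qed.

Lemma projmod_retract M N (s : N -> M) (r : M -> N) :
  projmod M -> morph s -> morph r -> cancel s r -> projmod N.
Proof.
move=> [gen_M pM] hs hr sK; split.
  by apply: fin_gen_surj hr _ gen_M => y; exists (s y).
move=> M' N' g h hg sg hh.
have [k [hk gk]] := pM M' N' g (fun x => h (r x)) hg sg (morph_comp hh hr).
exists (fun y => k (s y)); split; first exact: morph_comp.
by move=> y; rewrite gk sK.
Qed.

Lemma irreducible_proj_coker_not_projmod M N (C : lmodType A) (f : M -> N) (q : N -> C) :
  projmod N -> morph f -> irreducible_proj f -> is_coker f q -> ~ projmod C.
Proof.
move=> pN mf [nsec nret irr] [mq sq kq] [_ pC].
have [t [mt qtK]] := retraction_onto_projective mq sq pC.
pose p y := y - t (q y).
have mp : morph p by apply: morph_sub (@morph_id _ _) (morph_comp mt mq).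
have fp x : f x = p (f x).
  by rewrite /p (proj2 (kq _) (ex_intro _ x erefl)) (morph0 mt) subr0.
case: (irr N f p pN mf mp fp) => [// | [u [_ pu]]]; apply: nret.
apply: retraction_onto_projective mf _ pN.2 => y.
by apply/kq; rewrite -(pu y) /p (morphB mq) qtK subrr.
Qed.

Lemma in_Cn_projmod n (X : cpx A) i : in_Cn n X -> projmod (cobj X i).
Proof.
case=> _ _ pX zX; case: (boolP (1 <= i <= n)%N) => [/pX // | /zX].
exact: projmod_zero.
Qed.

End ProjectiveModules.

Section Kernel.
Variables (A : pzRingType) (M N : lmodType A) (g : {linear M -> N}).

Definition kerv : {pred M} := fun x => g x == 0.

Lemma kerv_submod_closed : subsemimod_closed kerv.
Proof.
split; [split|].
- by rewrite unfold_in /kerv linear0.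
- by move=> x y; rewrite !unfold_in /kerv linearD => /eqP-> /eqP->; rewrite addr0.
- by move=> a x; rewrite !unfold_in /kerv linearZZ => /eqP->; rewrite scaler0.
Qed.

HB.instance Definition _ := GRing.isSubmodClosed.Build A M kerv kerv_submod_closed.

Definition ker_mod := {x : M | x \in kerv}.
HB.instance Definition _ := [isSub for (@sval M (fun x => x \in kerv)) : ker_mod -> M].
HB.instance Definition _ := [Choice of ker_mod by <:].
HB.instance Definition _ := [SubChoice_isSubLmodule of ker_mod by <:].

Lemma morph_ker_val : morph (val : ker_mod -> M).
Proof. by move=> a x y; rewrite linearP. Qed.

End Kernel.

(* The cokernel of a split monomorphism f with retraction r is realised as
   the kernel of r. *)
Section CokernelOfSection.
Variables (A : pzRingType) (M N : lmodType A) (f : N -> M) (r : M -> N).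
Hypotheses (hf : morph f) (hr : morph r) (fK : cancel f r).

Lemma coker_proj_subproof y : y - f (r y) \in kerv (linmap hr).
Proof. by rewrite unfold_in /kerv /= (morphB hr) fK subrr. Qed.

Definition coker_proj y : ker_mod (linmap hr) :=
  Sub (y - f (r y)) (coker_proj_subproof y).

Lemma morph_coker_proj : morph coker_proj.
Proof.
move=> a x y; apply: val_inj; rewrite (morph_ker_val a) /coker_proj !SubK.
by rewrite (morph_sub (@morph_id _ _) (morph_comp hf hr)).
Qed.

Lemma coker_projK : cancel val coker_proj.
Proof.
move=> c; apply: val_inj; rewrite /coker_proj SubK.
have /eqP-> : r (val c) == 0 := valP c.
by rewrite (morph0 hf) subr0.
Qed.

Lemma is_coker_proj : is_coker f coker_proj.
Proof.
split; [exact: morph_coker_proj | by move=> c; exists (val c); rewrite coker_projK |].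
move=> y; split => [/(congr1 val) | [x <-]].
  by rewrite /coker_proj SubK /= => /eqP; rewrite subr_eq0 => /eqP->; exists (r y).
by apply: val_inj; rewrite /coker_proj SubK fK subrr.
Qed.

Lemma projmod_coker_proj : projmod M -> projmod (ker_mod (linmap hr)).
Proof.
move=> pM; apply: projmod_retract pM (@morph_ker_val _ _ _ _) morph_coker_proj _.
exact: coker_projK.
Qed.

End CokernelOfSection.

Section Cast.
Variables (A : pzRingType) (F : nat -> lmodType A).

(* Transport along i = j; it turns a map living in one degree into a family
   indexed by all degrees. *)
Definition cast_obj i j (x : F i) : F j :=
  match @eqP _ i j with ReflectT e => eq_rect i F x j e | ReflectF _ => 0 end.
Arguments cast_obj : clear implicits.

Lemma cast_obj_id i x : cast_obj i i x = x.
Proof. by rewrite /cast_obj; case: eqP => // e; rewrite (eq_irrelevance e erefl). Qed.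

Lemma morph_cast_obj i j : morph (@cast_obj i j).
Proof. by rewrite /cast_obj; case: eqP => [e | _]; [case: j / e | exact: morph_cst0]. Qed.

End Cast.
Arguments cast_obj {A} F i j x.
Arguments morph_cast_obj {A F i j}.

Section IfModule.
Variables (A : pzRingType) (c : bool) (M N : lmodType A).

Definition if_mod : lmodType A := if c then M else N.

Definition if_inl : M -> if_mod :=
  if c as b return M -> (if b then M else N : lmodType A) then id else fun=> 0.
Definition if_inr : N -> if_mod :=
  if c as b return N -> (if b then M else N : lmodType A) then fun=> 0 else id.
Definition if_outl : if_mod -> M :=
  if c as b return (if b then M else N : lmodType A) -> M then id else fun=> 0.
Definition if_outr : if_mod -> N :=
  if c as b return (if b then M else N : lmodType A) -> N then fun=> 0 else id.

Lemma morph_if_outl : morph if_outl.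
Proof. by rewrite /if_outl /if_mod; case: c => //; exact: morph_cst0. Qed.
Lemma morph_if_outr : morph if_outr.
Proof. by rewrite /if_outr /if_mod; case: c => //; exact: morph_cst0. Qed.

End IfModule.
Arguments if_inl {A c M N}.
Arguments if_inr {A c M N}.
Arguments if_outl {A c M N}.
Arguments if_outr {A c M N}.

Section Splice.
Variables (A : pzRingType) (P Q : cpx A) (m : nat) (Z : lmodType A).


Definition splice_obj j : lmodType A :=
  if_mod (j < m)%N (cobj P j) (if_mod (j == m) Z (cobj Q j)).

Definition outP j : splice_obj j -> cobj P j := if_outl.
Definition outZ j (w : splice_obj j) : Z := if_outl (if_outr w).
Definition outQ j (w : splice_obj j) : cobj Q j := if_outr (if_outr w).

Definition glue j (p : cobj P j) (z : Z) (q : cobj Q j) : splice_obj j :=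
  if_inl p + if_inr (if_inl z + if_inr q).

Arguments outP : clear implicits.
Arguments outZ : clear implicits.
Arguments outQ : clear implicits.
Arguments glue : clear implicits.

Local Ltac by_position j :=
  rewrite /glue /outP /outZ /outQ /splice_obj /if_inl /if_inr /if_outl /if_outr /if_mod;
  case: (ltngtP j m) => //= _; rewrite ?eqxx /= ?addr0 ?add0r.

Lemma morph_outP {j} : morph (outP j).
Proof. exact: morph_if_outl. Qed.
Lemma morph_outZ {j} : morph (outZ j).
Proof. exact: morph_comp (@morph_if_outl _ _ _ _) (@morph_if_outr _ _ _ _). Qed.
Lemma morph_outQ {j} : morph (outQ j).
Proof. exact: morph_comp (@morph_if_outr _ _ _ _) (@morph_if_outr _ _ _ _). Qed.

Lemma morph_glue (M : lmodType A) j (p : M -> cobj P j) (z : M -> Z)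
    (q : M -> cobj Q j) :
  morph p -> morph z -> morph q -> morph (fun x => glue j (p x) (z x) (q x)).
Proof.
move=> hp hz hq; by_position j; move=> a x y; rewrite ?addr0 ?add0r.
- exact: hp.
- exact: hq.
- exact: hz.
Qed.

Lemma outP_glue j p z q : outP j (glue j p z q) = if (j < m)%N then p else 0.
Proof. by by_position j. Qed.
Lemma outZ_glue j p z q : outZ j (glue j p z q) = if j == m then z else 0.
Proof. by by_position j. Qed.
Lemma outQ_glue j p z q : outQ j (glue j p z q) = if (m < j)%N then q else 0.
Proof. by by_position j. Qed.

Lemma glue_out j (w : splice_obj j) : glue j (outP j w) (outZ j w) (outQ j w) = w.
Proof. by move: w; by_position j; move=> w; rewrite ?addr0 ?add0r. Qed.

Lemma splice_ext j (w w' : splice_obj j) :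
  outP j w = outP j w' -> outZ j w = outZ j w' -> outQ j w = outQ j w' -> w = w'.
Proof. by move=> eP eZ eQ; rewrite -(glue_out w) -(glue_out w') eP eZ eQ. Qed.

Lemma outZ_0 j w : j != m -> outZ j w = 0.
Proof. by rewrite -(glue_out w) outZ_glue => /negbTE->. Qed.
Lemma outQ_0 j w : ~~ (m < j)%N -> outQ j w = 0.
Proof. by rewrite -(glue_out w) outQ_glue => /negbTE->. Qed.

Lemma glue0 j : glue j 0 0 0 = 0.
Proof. by by_position j. Qed.

Lemma glue_lt j p z q : (j < m)%N -> glue j p z q = glue j p 0 0.
Proof. by by_position j. Qed.
Lemma glue_eq j p z q : j == m -> glue j p z q = glue j 0 z 0.
Proof. by by_position j. Qed.
Lemma glue_gt j p z q : (m < j)%N -> glue j p z q = glue j 0 0 q.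
Proof. by by_position j. Qed.

Variables (a : forall j, cobj P j -> Z) (b : forall j, Z -> cobj Q j.+1).
Arguments a : clear implicits.

(* Only a m.-1 and b m enter the differential. *)
Definition splice_d j (w : splice_obj j) : splice_obj j.+1 :=
  glue j.+1 (cd (outP j w)) (a j (outP j w)) (b j (outZ j w) + cd (outQ j w)).

Definition splice : cpx A := Cpx splice_d.

Lemma splice_in_Cn n :
  in_Cn n P -> in_Cn n Q -> projmod Z -> (1 <= m <= n)%N ->
  (forall j, morph (a j)) -> (forall j, morph (b j)) ->
  (forall j x, j.+2 == m -> a j.+1 (cd x) = 0) ->
  (forall j x, j.+1 == m -> b j.+1 (a j x) = 0) ->
  (forall j z, j == m -> cd (b j z) = 0) ->
  in_Cn n splice.
Proof.
move=> [dP ddP pP zP] [dQ ddQ pQ zQ] pZ /andP[m1 mn] ha hb adP baQ dbQ.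
split.
- move=> j; apply: morph_glue.
  + exact: morph_comp (dP _) morph_outP.
  + exact: morph_comp (ha _) morph_outP.
  + exact: morph_add (morph_comp (hb _) morph_outZ) (morph_comp (dQ _) morph_outQ).
- move=> j w /=; apply: splice_ext; rewrite /splice_d.
  all: rewrite ?(morph0 morph_outP, morph0 morph_outZ, morph0 morph_outQ).
  + rewrite !outP_glue; case: ifP => // lt2; rewrite ifT ?ddP //.
    exact: ltn_trans lt2.
  + rewrite outZ_glue outP_glue; case: ifP => // /eqP e2.
    by rewrite ifT ?adP ?e2.
  + rewrite outQ_glue outZ_glue !outQ_glue; case: ifP => // gt2.
    case: (eqVneq j.+1 m) => [e1 | ne1].
      by rewrite -e1 ltnn baQ ?e1 // (morph0 (dQ _)) addr0.
    have gt1 : (m < j.+1)%N by rewrite ltnS leq_eqVlt eq_sym (negbTE ne1) in gt2.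
    rewrite (morph0 (hb _)) add0r gt1 (morphD (dQ _)) ddQ addr0.
    case: (eqVneq j m) => [e0 | ne0]; first by apply: dbQ; apply/eqP.
    by rewrite (outZ_0 _ ne0) (morph0 (hb _)) (morph0 (dQ _)).
- move=> j jn /=; rewrite /splice_obj /if_mod.
  by case: ifP => _; [exact: pP | case: ifP => _; [exact: pZ | exact: pQ]].
- move=> j jn w /=; rewrite -(glue_out w) (zP _ jn (outP j w)) (zQ _ jn (outQ j w)).
  by rewrite outZ_0 ?glue0 //; apply: contraNneq jn => ->; rewrite m1.
Qed.

Section MapIn.
Variables (X : cpx A) (hP : forall j, cobj X j -> cobj P j)
  (hZ : forall j, cobj X j -> Z) (hQ : forall j, cobj X j -> cobj Q j).
Arguments hP : clear implicits.
Arguments hZ : clear implicits.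
Arguments hQ : clear implicits.

Definition splice_in : cmap X splice := fun j x => glue j (hP j x) (hZ j x) (hQ j x).
Arguments splice_in : clear implicits.

Lemma splice_in_chain :
  (forall j, morph (@cd _ Q j)) -> (forall j, morph (b j)) ->
  (forall j, morph (hP j)) -> (forall j, morph (hZ j)) -> (forall j, morph (hQ j)) ->
  (forall j x, (j.+1 < m)%N -> cd (hP j x) = hP j.+1 (cd x)) ->
  (forall j x, j.+1 == m -> a j (hP j x) = hZ j.+1 (cd x)) ->
  (forall j x, j == m -> b j (hZ j x) = hQ j.+1 (cd x)) ->
  (forall j x, (m < j)%N -> cd (hQ j x) = hQ j.+1 (cd x)) ->
  chain_map splice_in.
Proof.
move=> dQ hb mP mZ mQ cP cPZ cZQ cQ; split => [j | j x /=]; first exact: morph_glue.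
apply: splice_ext; rewrite /splice_d /splice_in !(outP_glue, outZ_glue, outQ_glue).
- by case: ifP => // lt1; rewrite ifT ?(ltnW lt1) // cP.
- by case: ifP => // e1; rewrite ifT ?cPZ // -(eqP e1).
- case: ifP => // gt1; case: (eqVneq j m) => [e0 | ne0].
    by subst j; rewrite ltnn (morph0 (dQ _)) addr0 cZQ.
  have gt0 : (m < j)%N by rewrite ltnS leq_eqVlt eq_sym (negbTE ne0) in gt1.
  by rewrite gt0 (morph0 (hb _)) add0r cQ.
Qed.

Lemma section_splice_in : section_C splice_in ->
  [/\ forall j, (j < m)%N -> section_proj (hP j), section_proj (hZ m) &
      forall j, (m < j)%N -> section_proj (hQ j)].
Proof.
case=> g [[mg _] gK]; split.
- move=> j lt; exists (fun p => g j (glue j p 0 0)); split.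
    apply: morph_comp (mg j) _.
    by apply: morph_glue; [exact: morph_id | exact: morph_cst0..].
  by move=> x; rewrite -(glue_lt _ (hZ j x) (hQ j x) lt); apply: gK.
- exists (fun z => g m (glue m 0 z 0)); split.
    apply: morph_comp (mg m) _.
    by apply: morph_glue; [exact: morph_cst0 | exact: morph_id | exact: morph_cst0].
  by move=> x; rewrite -(glue_eq (hP m x) _ (hQ m x) (eqxx m)); apply: gK.
- move=> j gt; exists (fun q => g j (glue j 0 0 q)); split.
    apply: morph_comp (mg j) _.
    by apply: morph_glue; [exact: morph_cst0.. | exact: morph_id].
  by move=> x; rewrite -(glue_gt (hP j x) (hZ j x) _ gt); apply: gK.
Qed.

End MapIn.

Section MapOut.
Variables (Y : cpx A) (gP : forall j, cobj P j -> cobj Y j)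
  (gZ : forall j, Z -> cobj Y j) (gQ : forall j, cobj Q j -> cobj Y j).
Arguments gP : clear implicits.
Arguments gQ : clear implicits.
Hypotheses (mP : forall j, morph (gP j)) (mZ : forall j, morph (gZ j))
  (mQ : forall j, morph (gQ j)).
Arguments mP : clear implicits.
Arguments mZ : clear implicits.
Arguments mQ : clear implicits.

Definition splice_out : cmap splice Y :=
  fun j w => gP j (outP j w) + gZ j (outZ j w) + gQ j (outQ j w).
Arguments splice_out : clear implicits.

Lemma splice_out_glue j p z q : splice_out j (glue j p z q) =
  if (j < m)%N then gP j p else if j == m then gZ j z else gQ j q.
Proof.
rewrite /splice_out outP_glue outZ_glue outQ_glue.
case: (ltngtP j m) => [lt | gt | ->]; rewrite ?eqxx ?(ltn_eqF lt) ?(gtn_eqF gt).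
- by rewrite (morph0 (mZ _)) (morph0 (mQ _)) !addr0.
- by rewrite (morph0 (mP _)) (morph0 (mZ _)) !add0r.
- by rewrite (morph0 (mP _)) (morph0 (mQ _)) add0r addr0.
Qed.

Lemma splice_out_chain :
  (forall j, morph (@cd _ Q j)) -> (forall j, morph (@cd _ Y j)) ->
  (forall j, morph (b j)) ->
  (forall j x, (j.+1 < m)%N -> cd (gP j x) = gP j.+1 (cd x)) ->
  (forall j x, j.+1 == m -> cd (gP j x) = gZ j.+1 (a j x)) ->
  (forall j z, j == m -> cd (gZ j z) = gQ j.+1 (b j z)) ->
  (forall j x, (m < j)%N -> cd (gQ j x) = gQ j.+1 (cd x)) ->
  chain_map splice_out.
Proof.
move=> dQ dY hb cP cPZ cZQ cQ; split=> [j | j w /=].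
  apply: morph_add; first apply: morph_add.
  - exact: morph_comp (mP j) morph_outP.
  - exact: morph_comp (mZ j) morph_outZ.
  - exact: morph_comp (mQ j) morph_outQ.
rewrite -{1}(glue_out w) /splice_d !splice_out_glue.
case: (ltngtP j m) => [lt | gt | e]; last subst j.
- case: (ltngtP j.+1 m) => [lt1 | gt1 | e1].
  + exact: cP.
  + by move: gt1; rewrite ltnS leqNgt lt.
  + by apply: cPZ; apply/eqP.
- have gt1 : (m < j.+1)%N := ltn_trans gt (ltnSn j).
  rewrite (ltnNge j.+1 m) (ltnW gt1) (gtn_eqF gt1) /= (outZ_0 _ (negbT (gtn_eqF gt))).
  by rewrite (morph0 (hb _)) add0r cQ.
- rewrite (ltnNge m.+1 m) leqnSn (gtn_eqF (ltnSn m)) /= (outQ_0 _ (negbT (ltnn m))).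
  by rewrite (morph0 (dQ _)) addr0 cZQ.
Qed.

Lemma retraction_splice_out : retraction_C splice_out ->
  [/\ forall j, (j < m)%N -> retraction_proj (gP j), retraction_proj (gZ m) &
      forall j, (m < j)%N -> retraction_proj (gQ j)].
Proof.
case=> s [[ms _] sK]; split.
- move=> j lt; exists (fun y => outP j (s j y)); split.
    exact: morph_comp morph_outP (ms j).
  by move=> y; have := sK j y; rewrite /ccomp -{1}(glue_out (s j y)) splice_out_glue lt.
- exists (fun y => outZ m (s m y)); split.
    exact: morph_comp morph_outZ (ms m).
  move=> y; have := sK m y; rewrite /ccomp -{1}(glue_out (s m y)) splice_out_glue.
  by rewrite ltnn eqxx.
- move=> j gt; exists (fun y => outQ j (s j y)); split.
    exact: morph_comp morph_outQ (ms j).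
  move=> y; have := sK j y; rewrite /ccomp -{1}(glue_out (s j y)) splice_out_glue.
  by rewrite ltnNge (ltnW gt) gtn_eqF.
Qed.

End MapOut.

Lemma irreducible_C_through_splice n (X Y : cpx A) (f : cmap X Y)
    (hP : forall j, cobj X j -> cobj P j) (hZ : forall j, cobj X j -> Z)
    (hQ : forall j, cobj X j -> cobj Q j) (gP : forall j, cobj P j -> cobj Y j)
    (gZ : forall j, Z -> cobj Y j) (gQ : forall j, cobj Q j -> cobj Y j) :
  irreducible_C n f -> in_Cn n splice ->
  chain_map (splice_in hP hZ hQ) -> chain_map (splice_out gP gZ gQ) ->
  (forall j, morph (gP j)) -> (forall j, morph (gZ j)) -> (forall j, morph (gQ j)) ->
  (forall j x, (j < m)%N -> f j x = gP j (hP j x)) ->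
  (forall x, f m x = gZ m (hZ m x)) ->
  (forall j x, (m < j)%N -> f j x = gQ j (hQ j x)) ->
  [/\ forall j, (j < m)%N -> section_proj (hP j), section_proj (hZ m) &
      forall j, (m < j)%N -> section_proj (hQ j)] \/
  [/\ forall j, (j < m)%N -> retraction_proj (gP j), retraction_proj (gZ m) &
      forall j, (m < j)%N -> retraction_proj (gQ j)].
Proof.
move=> [_ _ irr] splice_Cn in_chain out_chain mP mZ mQ fP fZ fQ.
have f_eq : cmap_eq f (ccomp (splice_out gP gZ gQ) (splice_in hP hZ hQ)).
  move=> j x; rewrite /ccomp /splice_in splice_out_glue //.
  case: (ltngtP j m) => [lt | gt | e]; [exact: fP | exact: fQ | by subst j; apply: fZ].
case: (irr _ _ _ splice_Cn in_chain out_chain f_eq) => [sec | ret].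
  by left; apply: section_splice_in.
by right; apply: retraction_splice_out.
Qed.

End Splice.

Section IrreducibleChainMap.
Variables (A : pzRingType) (n : nat) (X Y : cpx A) (f : cmap X Y).
Arguments f : clear implicits.
Hypotheses (hX : in_Cn n X) (hY : in_Cn n Y) (hf : chain_map f)
  (irr : irreducible_C n f).

Lemma irreducible_C_component_factor i (Z : lmodType A) (h : cobj X i -> Z)
    (g : Z -> cobj Y i) :
  (1 <= i <= n)%N -> projmod Z -> morph h -> morph g -> (forall x, f i x = g (h x)) ->
  (section_proj h /\ forall j, (i < j)%N -> section_proj (f j)) \/
  (retraction_proj g /\ forall j, (j < i)%N -> retraction_proj (f j)).
Proof.
move=> hi pZ mh mg fgh; have [dX ddX _ _] := hX; have [dY ddY _ _] := hY.
have [mf fd] := hf.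
pose a j (x : cobj X j) := h (cast_obj (cobj X) j.+1 i (cd x)).
pose b j (z : Z) := cd (cast_obj (cobj Y) i j (g z)).
pose hZ j (x : cobj X j) := h (cast_obj (cobj X) j i x).
pose gZ j (z : Z) := cast_obj (cobj Y) i j (g z).
have ma j : morph (a j) by apply: morph_comp mh (morph_comp morph_cast_obj (dX _)).
have mb j : morph (b j) by apply: morph_comp (dY _) (morph_comp morph_cast_obj mg).
have mhZ j : morph (hZ j) by apply: morph_comp mh morph_cast_obj.
have mgZ j : morph (gZ j) by apply: morph_comp morph_cast_obj mg.
have splice_Cn : in_Cn n (splice i a b).
  apply: splice_in_Cn => // j x /eqP ji.
  - by rewrite /a ddX (morph0 morph_cast_obj) (morph0 mh).
  - by subst i; rewrite /a /b !cast_obj_id -fgh fd ddX (morph0 (mf _)).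
  - by rewrite /b ddY.
have in_chain : chain_map (splice_in i a b (fun j x => x) hZ f).
  apply: splice_in_chain => // j x /eqP ji; subst i.
  by rewrite /b /hZ !cast_obj_id -fgh fd.
have out_chain : chain_map (splice_out (m := i) (a := a) (b := b) f gZ (fun j y => y)).
  apply: splice_out_chain => // j x /eqP ji; subst i.
  by rewrite /gZ /a !cast_obj_id -fgh fd.
have fZ x : f i x = gZ i (hZ i x) by rewrite /gZ /hZ !cast_obj_id fgh.
have [[_ sZ sQ] | [rP rZ _]] := irreducible_C_through_splice irr splice_Cn in_chain
  out_chain mf mgZ (fun=> @morph_id _ _) (fun _ _ _ => erefl) fZ (fun _ _ _ => erefl).
- by left; split=> //; apply: section_proj_ext sZ => x; rewrite /hZ cast_obj_id.
- by right; split=> //; apply: retraction_proj_ext rZ => z; rewrite /gZ cast_obj_id.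
Qed.

Lemma retraction_section_split m :
  (1 <= m)%N -> (m < n)%N -> retraction_proj (f m) -> section_proj (f m.+1) ->
  (forall j, (j <= m)%N -> section_proj (f j)) \/
  (forall j, (m < j)%N -> retraction_proj (f j)).
Proof.
move=> m1 mn [s [ms fs]] [r [mr rf]].
have [dX ddX _ _] := hX; have [dY ddY _ _] := hY; have [mf fd] := hf.
pose a j (y : cobj Y j) := cast_obj (cobj Y) j.+1 m (cd y).
pose b j (z : cobj Y m) := cast_obj (cobj X) m.+1 j.+1 (r (cd z)).
pose hZ j (x : cobj X j) := cast_obj (cobj Y) j m (f j x).
pose gZ j (z : cobj Y m) := cast_obj (cobj Y) m j z.
have ma j : morph (a j) by apply: morph_comp morph_cast_obj (dY _).
have mb j : morph (b j) by apply: morph_comp morph_cast_obj (morph_comp mr (dY _)).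
have mhZ j : morph (hZ j) by apply: morph_comp morph_cast_obj (mf _).
have mgZ j : morph (gZ j) := morph_cast_obj.
have frd z : f m.+1 (r (cd z)) = cd z by rewrite -{1 2}(fs z) fd rf.
have splice_Cn : in_Cn n (splice m a b).
  apply: splice_in_Cn => //.
  - exact: in_Cn_projmod hY.
  - by rewrite m1 ltnW.
  - by move=> j y _; rewrite /a ddY (morph0 morph_cast_obj).
  - by move=> j y /eqP mj; subst m; rewrite /a /b !cast_obj_id ddY (morph0 mr).
  - by move=> j z /eqP jm; subst j; rewrite /b cast_obj_id -(fs z) fd rf ddX.
have in_chain : chain_map (splice_in m a b f hZ (fun j x => x)).
  apply: splice_in_chain => // j x.
  - by move=> _; rewrite /a /hZ fd.
  - by move=> /eqP jm; subst j; rewrite /b /hZ !cast_obj_id fd rf.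
have out_chain : chain_map (splice_out (m := m) (a := a) (b := b) (fun j y => y) gZ f).
  apply: splice_out_chain => // j.
  - by move=> y /eqP mj; subst m; rewrite /gZ /a !cast_obj_id.
  - by move=> z /eqP jm; subst j; rewrite /gZ /b !cast_obj_id frd.
have fZ x : f m x = gZ m (hZ m x) by rewrite /gZ /hZ !cast_obj_id.
have [[sP sZ _] | [_ _ rQ]] := irreducible_C_through_splice irr splice_Cn in_chain
  out_chain (fun=> @morph_id _ _) mgZ mf (fun _ _ _ => erefl) fZ (fun _ _ _ => erefl).
  left=> j; rewrite leq_eqVlt => /orP[/eqP-> | /sP //].
  by apply: section_proj_ext sZ => x; rewrite /hZ cast_obj_id.
by right; exact: rQ.
Qed.

Lemma component_out_of_range j :
  ~~ (1 <= j <= n)%N -> section_proj (f j) /\ retraction_proj (f j).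
Proof.
move=> jn; have [_ _ _ zX] := hX; have [_ _ _ zY] := hY; have [mf _] := hf.
split; exists (fun=> 0); (split; first exact: morph_cst0).
- by move=> x; rewrite (zX _ jn x).
- by move=> y; rewrite (morph0 (mf _)) (zY _ jn y).
Qed.

Lemma sections_above_or_retraction i : (1 <= i <= n)%N ->
  (forall j, (i < j)%N -> section_proj (f j)) \/ retraction_proj (f i).
Proof.
move=> hi; have [mf _] := hf.
have [[_ sec] | [ret _]] := irreducible_C_component_factor hi (in_Cn_projmod i hX)
  (@morph_id _ _) (mf i) (fun=> erefl).
- by left.
- by right.
Qed.

Lemma irreducible_proj_component i : (1 <= i <= n)%N ->
  ~ section_proj (f i) -> ~ retraction_proj (f i) -> irreducible_proj (f i).
Proof.
move=> hi nsec nret; split=> // Z h g pZ mh mg fgh.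
have [[? _] | [? _]] := irreducible_C_component_factor hi pZ mh mg fgh.
- by left.
- by right.
Qed.

Lemma irreducible_C_trichotomy : type_sec n f \/ type_ris n f \/ type_ret n f.
Proof.
case: (classic (type_ret n f)) => [ret | nret]; first by right; right.
have [k0 nret0] : exists k, ~ retraction_proj (f k).
  apply: NNPP => all_ret; apply: nret => j _.
  by apply: NNPP => nretj; apply: all_ret; exists j.
have [k [nretk min_k]] := least_witness (P := fun k => ~ retraction_proj (f k)) nret0.
have ret_below j : (j < k)%N -> retraction_proj (f j) by move/min_k/NNPP.
have hk : (1 <= k <= n)%N.
  by case: (boolP (1 <= k <= n)%N) => // /component_out_of_range[_ /nretk].
have sec_above : forall j, (k < j)%N -> section_proj (f j).
  by case: (sections_above_or_retraction hk).
case: (classic (section_proj (f k))) => [seck | nseck]; last first.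
  right; left; exists k; split.
  - exact: hk.
  - exact: irreducible_proj_component.
  - by move=> j /andP[/sec_above].
  - by move=> j /andP[_ /ret_below].
left=> j /andP[j1 jn]; case: (ltngtP j k) => [jk | /sec_above // | -> //].
have [k' kE] : exists k', k = k'.+1.
  by exists k.-1; rewrite prednK // (leq_ltn_trans _ jk).
subst k; have k'1 : (1 <= k')%N by rewrite (leq_trans j1) // -ltnS.
have k'n : (k' < n)%N by case/andP: hk.
case: (retraction_section_split k'1 k'n (ret_below _ (ltnSn k')) seck) => [sec | ret].
  by apply: sec; rewrite -ltnS.
by case: nretk; apply: ret.
Qed.

Lemma type_sec_component i : type_sec n f -> section_proj (f i).
Proof.
move=> sec; case: (boolP (1 <= i <= n)%N) => [/sec // | /component_out_of_range[] //].
Qed.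

Lemma type_ret_coker_zero : type_ret n f -> coker_zero f.
Proof.
move=> ret i; apply: surj_retraction.
by case: (boolP (1 <= i <= n)%N) => [/ret | /component_out_of_range[]].
Qed.

Lemma coker_zero_type_ret : coker_zero f -> type_ret n f.
Proof.
move=> cz i _; apply: retraction_onto_projective (hf.1 i) (cz i) _.
exact: (in_Cn_projmod i hY).2.
Qed.

(* X^0 = 0 serves as the zero cokernel. *)
Lemma coker_zero_in_Cn : coker_zero f -> coker_in_Cn n f.
Proof.
move=> cz i; have [_ _ _ zX] := hX.
have X0 (x : cobj X 0) : x = 0 by apply: zX.
exists (cobj X 0), (fun=> 0); split; last exact: projmod_zero.
split; [exact: morph_cst0 | by move=> c; exists 0; rewrite (X0 c) |].
by move=> y; split=> // _; apply: cz.
Qed.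

Lemma type_sec_coker_in_Cn : type_sec n f -> coker_in_Cn n f.
Proof.
move=> sec i; have [r [mr rK]] := type_sec_component i sec.
exists (ker_mod (linmap mr)), (coker_proj mr rK); split.
  exact: is_coker_proj (hf.1 i) mr rK.
exact: projmod_coker_proj (hf.1 i) mr rK (in_Cn_projmod i hY).
Qed.

Lemma type_sec_coker_nonzero : type_sec n f -> ~ coker_zero f.
Proof.
move=> sec cz; have [nsec _ _] := irr; have [_ fd] := hf; apply: nsec.
have inv i : exists g : cobj Y i -> cobj X i,
    morph g /\ cancel (f i) g /\ cancel g (f i).
  have [r [mr rK]] := type_sec_component i sec.
  by exists r; do 2!split=> //; move=> y; have [x <-] := cz i y; rewrite rK.
pose g i := proj1_sig (constructive_indefinite_description _ (inv i)).
have gP i : morph (g i) /\ cancel (f i) (g i) /\ cancel (g i) (f i).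
  by rewrite /g; case: constructive_indefinite_description.
exists g; split; last by move=> i x; have [_ [gK _]] := gP i; apply: gK.
split=> [i | i y]; first by have [] := gP i.
have [_ [_ fK]] := gP i; have [_ [gK fK1]] := gP i.+1.
by apply: (can_inj gK); rewrite -fd !fK1 fK.
Qed.

Lemma type_ris_coker_notin_Cn : type_ris n f -> ~ coker_in_Cn n f.
Proof.
case=> i [_ irr_i _ _] /(_ i) [C [q [qcok pC]]].
exact: irreducible_proj_coker_not_projmod (in_Cn_projmod i hY) (hf.1 i) irr_i qcok pC.
Qed.

End IrreducibleChainMap.

Theorem proposition2p6 (R : comNzRingType) (L : algType R)
    (n : nat) (X Y : cpx L^c) (f : cmap X Y) :
  artin_algebra L ->
  (2 <= n)%N ->
  in_Cn n X -> in_Cn n Y ->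
  chain_map f -> irreducible_C n f ->
  (indecomposable_C n X \/ indecomposable_C n Y) ->
  [/\ (type_sec n f <-> coker_in_Cn n f /\ ~ coker_zero f),
      (type_ris n f <-> ~ coker_in_Cn n f) &
      (type_ret n f <-> coker_zero f)].
Proof.
move=> _ _ hX hY hf irr _.
have sec_cin := type_sec_coker_in_Cn hX hY hf.
have sec_ncz := type_sec_coker_nonzero hX hY hf irr.
have ris_ncin := type_ris_coker_notin_Cn hY hf.
have ret_cz := type_ret_coker_zero hX hY hf.
have cz_cin := coker_zero_in_Cn hX.
have types := irreducible_C_trichotomy hX hY hf irr.
split; split.
- by move=> sec; split; [exact: sec_cin | exact: sec_ncz].
- by case=> cin ncz; case: types => [// | [/ris_ncin // | /ret_cz //]].
- exact: ris_ncin.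
- by move=> ncin; case: types => [/sec_cin // | [// | /ret_cz/cz_cin //]].
- exact: ret_cz.
- exact: coker_zero_type_ret hY hf.
Qed.
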